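(* Let $0\le c<\sqrt2-1$. Let $a,b_1,b_2$ be positive integers such that $ca$ and $cb_2$ are integers and $b_1/((1+c)b_2)$ is a positive integer. Let $w_1$ be the infinite word $1_{\infty,a}$ or $2_{\infty,a}$, let $w_2=1_{b_1,b_2}2_{b_1,b_2}$, and let $s$ be a (finite) common subsequence of $w_1$ and $w_2$. Then \[\operatorname{span}_{w_1}s+2b_1\ \ge\ (3+c)\operatorname{len} s-\frac{4ab_1}{b_2}.\]
   Context: Words are over the alphabet $\{1,2\}$; $\alpha^m$ denotes letter $\alpha$ repeated $m$ times and $u^m$ denotes $m$ copies of the word $u$ concatenated. For a positive integer $M$ (with the relevant quantities integers), $1_{M,a}=(1^a2^{ca})^{M/((1+c)a)}$ and $2_{M,a}=(2^a1^{ca})^{M/((1+c)a)}$; $1_{\infty,a}$ and $2_{\infty,a}$ denote the infinite repetitions of $1^a2^{ca}$ and $2^a1^{ca}$ respectively. Symbols are distinguishable positions; a common subsequence of $w_1,w_2$ is a pair of subsequences of $w_1$ and $w_2$ equal as words, of length $\operatorname{len} s$. $\operatorname{span}_{w_1}s$ is the length of the shortest block of consecutive symbols of $w_1$ containing the part of $s$ lying in $w_1$. *)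

From HB Require Import structures.
From mathcomp Require Import all_boot all_order all_algebra.
From mathcomp Require Import reals.
Set Implicit Arguments. Unset Strict Implicit. Unset Printing Implicit Defensive.

(* Periodic pattern with blocks x^a y^k repeated: letter at position i
   (0-indexed) of (x^a y^k)^infinity. *)
Definition blockpat (a k x y : nat) (i : nat) : nat :=
  if i %% (a + k) < a then x else y.

(* 1_{oo,a} and 2_{oo,a}, where k = c*a. *)
Definition one_inf (a k : nat) : nat -> nat := blockpat a k 1 2.
Definition two_inf (a k : nat) : nat -> nat := blockpat a k 2 1.

(* 1_{M,b} = (1^b 2^{k})^{M/(b+k)} and 2_{M,b} = (2^b 1^k)^{M/(b+k)}, with
   k = c*b; when (b+k) divides M these words have length M. *)
Definition one_fin (M b k : nat) : seq nat := mkseq (blockpat b k 1 2) M.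
Definition two_fin (M b k : nat) : seq nat := mkseq (blockpat b k 2 1) M.

(* A common subsequence of an infinite word w1 and a finite word w2, given by
   the strictly increasing lists of positions p (in w1) and q (in w2) of its
   symbols, with equal letters. *)
Definition common_subseq (w1 : nat -> nat) (w2 : seq nat) (p q : seq nat) : Prop :=
  [/\ sorted ltn p, sorted ltn q, size p = size q,
      all (fun j => j < size w2) q & map w1 p = map (nth 0 w2) q].

(* Length of the shortest block of consecutive positions containing all
   positions in p (p strictly increasing); 0 if p is empty. *)
Definition span_pos (p : seq nat) : nat :=
  if p is x :: t then (last x t - x).+1 else 0.

(* Give each symbol of s the weight a + ka if it is the letter x whose blocks
   in w1 have length a, and 3a + ka otherwise, so that the total weight is
   (3a + ka) len s - 2a #x(s) >= (3a + ka) len s - 2a b1.  The word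
   w2 = 1_{b1,b2} 2_{b1,b2} consists of 4m runs of a constant letter, so s splits
   into at most 4m groups of equal letters whose w1-positions occupy disjoint
   windows.  Since (1 + c)^2 <= 2, the copies of one letter inside a window of w1
   of length W have total weight at most aW + a^2; summing over the groups bounds
   the total weight by a span_{w1} s + 4m a^2, and 4m a^2 <= 4a b1 / b2. *)

From HB Require Import structures.
From mathcomp Require Import all_boot all_order all_algebra.
From mathcomp Require Import reals.
From mathcomp Require Import zify ring lra.

Section PeriodicCount.
Variables (P0 : pred nat) (n : nat).
Hypothesis P0_periodic : forall i, P0 (i + n) = P0 i.

Lemma count_iota_period u : count P0 (iota u n) = count P0 (iota 0 n).
Proof.
elim: u => // u <-; apply/eqP; rewrite -(eqn_add2l (P0 u)).
have /(congr1 (count P0)) := iotaD u n 1; rewrite addn1 /= => ->.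
by rewrite count_cat /= P0_periodic addn0 addnC.
Qed.

Lemma count_iota_period_mul k u :
  count P0 (iota u (k * n)) = k * count P0 (iota 0 n).
Proof.
elim: k u => [|k IH] u; first by rewrite !mul0n.
by rewrite mulSn iotaD count_cat IH count_iota_period mulSn.
Qed.

Lemma count_iota_period_le K u L : 0 < n -> count P0 (iota 0 n) = K ->
  n * count P0 (iota u L) <= K * L + K * (n - K).
Proof.
move=> n_gt0 countK.
have K_le_n : K <= n by rewrite -countK -[leqRHS](size_iota 0) count_size.
rewrite {1 2}(divn_eq L n) iotaD count_cat count_iota_period_mul countK.
set r := L %% n; set c := count P0 _.
have r_lt_n : r < n by rewrite ltn_mod.
have c_le_r : c <= r by rewrite -[leqRHS](size_iota (u + L %/ n * n)) count_size.
have c_le_K : c <= K.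
  rewrite /c -countK -(count_iota_period (u + L %/ n * n)); move: (u + _) => v.
  by rewrite -(subnKC (ltnW r_lt_n)) iotaD count_cat leq_addr.
have cK_le : c * K <= r * K by rewrite leq_mul2r c_le_r orbT.
have cnK_le : c * (n - K) <= K * (n - K) by rewrite leq_mul2r c_le_K orbT.
nia.
Qed.

End PeriodicCount.

Lemma path_ltn_last [x : nat] [s] : path ltn x s -> x <= last x s.
Proof.
elim: s x => //= y s IH x /andP[lt_xy path_s].
exact: leq_trans (ltnW lt_xy) (IH _ path_s).
Qed.

Lemma count_iota_mono (P0 : pred nat) u n n' : n <= n' ->
  count P0 (iota u n) <= count P0 (iota u n').
Proof. by move=> le_nn'; rewrite -(subnKC le_nn') iotaD count_cat leq_addr. Qed.

Lemma count_iota_upto (P0 : pred nat) [u v] : u <= v ->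
  count P0 (iota u (v - u).+1) = count P0 (iota u (v - u)) + P0 v.
Proof. by move=> le_uv; rewrite -addn1 iotaD count_cat /= subnKC // addn0. Qed.

Section RunDecomposition.
Variables (w1 : nat -> nat) (w2 : seq nat) (run wt : nat -> nat) (A C : nat).
Hypothesis run_homo : {homo run : j j' / j <= j'}.
Hypothesis run_constant : forall [j j'], j < size w2 -> j' < size w2 ->
  run j = run j' -> nth 0 w2 j = nth 0 w2 j'.
Hypothesis window_weight : forall l u W,
  wt l * count (fun i => w1 i == l) (iota u W) <= A * W + C.

Lemma window_weight_upto [u v] : u <= v ->
  wt (w1 v) * (count (fun i => w1 i == w1 v) (iota u (v - u))).+1
    <= A * (v - u).+1 + C.
Proof.
move=> le_uv; have := window_weight (w1 v) u (v - u).+1.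
by rewrite count_iota_upto // eqxx addn1.
Qed.

(* The window [u, p0] of w1 is allotted to the group of p0, whose earlier
   symbols lie in [u, p0). *)
Lemma weight_runs_le [u p0 p q0 q] :
  u <= p0 -> path ltn p0 p -> path ltn q0 q -> size p = size q ->
  map w1 (p0 :: p) = map (nth 0 w2) (q0 :: q) ->
  all (fun j => j < size w2) (q0 :: q) ->
  wt (w1 p0) * count (fun i => w1 i == w1 p0) (iota u (p0 - u))
    + sumn (map wt (map w1 (p0 :: p)))
  <= A * (last p0 p - u).+1 + C * (run (last q0 q) - run q0).+1.
Proof.
elim: p u p0 q q0 => [|p1 p IH] u p0 [|q1 q] q0 //= le_u_p0.
  move=> _ _ _ _ _; rewrite subnn muln1 addn0 -mulnSr.
  exact: window_weight_upto.
move=> /andP[lt_p01 path_p] /andP[lt_q01 path_q] [size_pq].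
move=> [e0 e1 e_pq] /and3P[q0_lt q1_lt q_lt].
have all_q1 : all (fun j => j < size w2) (q1 :: q) by rewrite /= q1_lt q_lt.
have IH1 u' (le_u'_p1 : u' <= p1) :=
  IH u' p1 q q1 le_u'_p1 path_p path_q size_pq (congr2 cons e1 e_pq) all_q1.
have [same_run|new_run] := eqVneq (run q1) (run q0).
  have same_letter : w1 p1 = w1 p0 by rewrite e1 e0 (run_constant q1_lt q0_lt same_run).
  have := IH1 u (leq_trans le_u_p0 (ltnW lt_p01)).
  rewrite /= same_letter same_run; apply: leq_trans.
  rewrite addnA leq_add2r -mulnSr leq_mul2l.
  have := count_iota_upto (fun i => w1 i == w1 p0) le_u_p0; rewrite eqxx addn1 => <-.
  by apply/orP; right; apply: count_iota_mono; lia.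
have := IH1 p1 (leqnn p1); rewrite subnn /= muln0 add0n.
have lt_run : run q0 < run q1 by rewrite ltn_neqAle eq_sym new_run run_homo // ltnW.
have le_p1_last := path_ltn_last path_p.
have le_run_last : run q1 <= run (last q1 q) by rewrite run_homo // path_ltn_last.
have window_p0 := window_weight_upto le_u_p0.
have A_split : A * (p0 - u).+1 + A * (last p1 p - p1).+1 <= A * (last p1 p - u).+1.
  by rewrite -mulnDr leq_mul2l; apply/orP; right; lia.
have C_split : C + C * (run (last q1 q) - run q1).+1 <= C * (run (last q1 q) - run q0).+1.
  by rewrite -{1}(muln1 C) -mulnDr leq_mul2l; apply/orP; right; lia.
rewrite mulnS in window_p0; lia.
Qed.

Lemma weight_common_subseq_le p0 p q0 q :
  common_subseq w1 w2 (p0 :: p) (q0 :: q) ->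
  sumn (map wt (map w1 (p0 :: p)))
    <= A * span_pos (p0 :: p) + C * (run (last q0 q) - run q0).+1.
Proof.
case=> /= path_p path_q [size_pq] all_q map_pq.
have := weight_runs_le (leqnn p0) path_p path_q size_pq map_pq all_q.
by rewrite subnn muln0.
Qed.

End RunDecomposition.

Arguments weight_common_subseq_le [w1 w2 run wt A C] _ _ _ [p0 p q0 q].

Lemma blockpat_periodic a k x y i :
  blockpat a k x y (i + (a + k)) = blockpat a k x y i.
Proof. by rewrite /blockpat modnDr. Qed.

Lemma mkseq_blockpat a k x y :
  mkseq (blockpat a k x y) (a + k) = nseq a x ++ nseq k y.
Proof.
apply: (@eq_from_nth _ 0); first by rewrite size_mkseq size_cat !size_nseq.
move=> i; rewrite size_mkseq => lt_i_ak.
rewrite nth_mkseq // nth_cat size_nseq !nth_nseq /blockpat modn_small //.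
have [|le_a_i] := ltnP i a; first by [].
by rewrite ltn_subLR // lt_i_ak.
Qed.

Lemma count_blockpat_period a k x y l :
  count (fun i => blockpat a k x y i == l) (iota 0 (a + k))
    = (x == l) * a + (y == l) * k.
Proof.
by rewrite -[LHS](count_map _ (pred1 l)) -/(mkseq _ _) mkseq_blockpat count_cat !count_nseq.
Qed.

Definition letter_weight (a k x l : nat) := if l == x then a + k else 3 * a + k.

Lemma blockpat_window_weight [a k x y] l u W :
  0 < a -> (a + k) ^ 2 <= 2 * a ^ 2 -> x != y ->
  letter_weight a k x l * count (fun i => blockpat a k x y i == l) (iota u W)
    <= a * W + a * a.
Proof.
move=> a_gt0 ak_sqr_le neq_xy; have k_le_a : k <= a by nia.
have periodic i : (blockpat a k x y (i + (a + k)) == l) = (blockpat a k x y i == l).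
  by rewrite blockpat_periodic.
have := @count_iota_period_le _ _ periodic _ u W (ltn_addr _ a_gt0)
  (count_blockpat_period a k x y l).
rewrite /letter_weight; set t := count _ _.
have [<-|_] := eqVneq x l.
  by rewrite eq_sym (negbTE neq_xy) mul1n mul0n addn0 addKn; nia.
rewrite mul0n add0n.
case: (eqVneq y l) => [_|_]; last by rewrite mul0n; nia.
rewrite mul1n addnK.
have [->|k_gt0] := posnP k; first by rewrite !mul0n addn0; nia.
move=> window_le; rewrite -(leq_pmul2l k_gt0).
have weight_le : k * (3 * a + k) <= a * (a + k) by nia.
rewrite mulnA; apply: (leq_trans (leq_mul weight_le (leqnn t))); nia.
Qed.

(* Half of [run_index b k j] is the period of w2 containing j, its parity tells
   the block (b or k) of that period. *)
Definition run_index (b k j : nat) := (b <= j %% (b + k)) + (j %/ (b + k)).*2.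

Lemma run_index_homo b k : {homo run_index b k : j j' / j <= j'}.
Proof.
move=> j j' le_jj'; rewrite /run_index.
have := leq_div2r (b + k) le_jj'; rewrite leq_eqVlt => /orP[/eqP eq_q|lt_q].
  have := divn_eq j (b + k); have := divn_eq j' (b + k); rewrite -eq_q.
  by case: leqP; case: leqP; lia.
by case: leqP; case: leqP; lia.
Qed.

Section OneTwoFin.
Variables (m b k : nat).
Local Notation w2 := (one_fin (m * (b + k)) b k ++ two_fin (m * (b + k)) b k).

Lemma count_one_two_fin_le l : count (fun z => z == l) w2 <= m * (b + k).
Proof.
have count_fin x y : count (fun z => z == l) (mkseq (blockpat b k x y) (m * (b + k)))
    = m * ((x == l) * b + (y == l) * k).
  rewrite count_map (count_iota_period_mul _) ?count_blockpat_period //.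
  by move=> i; rewrite /preim /= blockpat_periodic.
rewrite count_cat !count_fin.
by move: l {count_fin} => [|[|[|l]]] /=; nia.
Qed.

Lemma size_one_two_fin : size w2 = m * (b + k) + m * (b + k).
Proof. by rewrite size_cat !size_mkseq. Qed.

Hypothesis bk_gt0 : 0 < b + k.

Lemma nth_one_two_fin j : j < size w2 ->
  nth 0 w2 j = if j %/ (b + k) < m then blockpat b k 1 2 j else blockpat b k 2 1 j.
Proof.
rewrite size_one_two_fin => lt_j.
rewrite nth_cat size_mkseq ltn_divLR //.
case: ltnP => le_j; first by rewrite nth_mkseq.
rewrite nth_mkseq; last by rewrite ltn_subLR.
by rewrite /blockpat -{2}(subnKC le_j) addnC modnMDl.
Qed.

Lemma run_index_constant j j' : j < size w2 -> j' < size w2 ->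
  run_index b k j = run_index b k j' -> nth 0 w2 j = nth 0 w2 j'.
Proof.
move=> lt_j lt_j' eq_run.
have eq_q := congr1 half eq_run; rewrite !half_bit_double in eq_q.
have eq_bit := congr1 odd eq_run; rewrite !oddD !odd_double !addbF !oddb in eq_bit.
by rewrite !nth_one_two_fin // /blockpat eq_q !ltnNge eq_bit.
Qed.

Lemma run_index_lt j : j < size w2 -> run_index b k j < 4 * m.
Proof.
rewrite size_one_two_fin => lt_j.
have : j %/ (b + k) < 2 * m by rewrite ltn_divLR // -mulnA mul2n -addnn.
rewrite /run_index; case: leqP; lia.
Qed.

End OneTwoFin.

Lemma count_map_nth_le (P0 : pred nat) (s q : seq nat) :
  uniq q -> all (fun j => j < size s) q -> count P0 (map (nth 0 s) q) <= count P0 s.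
Proof.
move=> uniq_q q_lt.
rewrite -{2}(mkseq_nth 0 s) /mkseq !count_map -!size_filter.
apply: uniq_leq_size; first exact: filter_uniq.
move=> j; rewrite !mem_filter => /andP[-> j_q] /=.
by rewrite mem_iota add0n (allP q_lt).
Qed.

Lemma sumn_letter_weight a k x s :
  sumn (map (letter_weight a k x) s) + 2 * a * count (fun z => z == x) s
    = (3 * a + k) * size s.
Proof.
elim: s => [|l s IH] /=; first by rewrite !muln0.
rewrite {1}/letter_weight eq_sym.
by case: eqP => _ /=; rewrite ?add0n ?add1n !mulnS -IH; set c := 2 * a * _; lia.
Qed.

Lemma blockpat_common_subseq_le a ka b kb m x y p q :
  0 < a -> 0 < b -> (a + ka) ^ 2 <= 2 * a ^ 2 -> x != y ->
  common_subseq (blockpat a ka x y)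
    (one_fin (m * (b + kb)) b kb ++ two_fin (m * (b + kb)) b kb) p q ->
  (3 * a + ka) * size p <= a * span_pos p + 2 * a * (m * (b + kb)) + 4 * m * (a * a).
Proof.
move=> a_gt0 b_gt0 ak_sqr_le neq_xy.
have bk_gt0 : 0 < b + kb by rewrite ltn_addr.
case: p q => [|p0 p] [|q0 q]; [by rewrite muln0 | by rewrite muln0 | by case=> _ _ /eqP | move=> cs].
have weight_le := weight_common_subseq_le (@run_index_homo b kb)
  (run_index_constant m b kb bk_gt0)
  (fun l u W => blockpat_window_weight l u W a_gt0 ak_sqr_le neq_xy) cs.
case: cs => _ sorted_q _ q_lt map_pq.
have last_lt : run_index b kb (last q0 q) < 4 * m.
  by apply: (run_index_lt m b kb bk_gt0); apply: (allP q_lt); rewrite mem_last.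
have count_le : count (fun z => z == x) (map (blockpat a ka x y) (p0 :: p)) <= m * (b + kb).
  rewrite map_pq; apply: leq_trans (count_one_two_fin_le m b kb x).
  apply: count_map_nth_le q_lt; exact: sorted_uniq ltn_trans ltnn _ sorted_q.
rewrite -(size_map (blockpat a ka x y)) -(sumn_letter_weight a ka x).
have runs_le : a * a * (run_index b kb (last q0 q) - run_index b kb q0).+1 <= 4 * m * (a * a).
  by rewrite mulnC leq_mul2r; apply/orP; right; lia.
have := leq_mul (leqnn (2 * a)) count_le; rewrite /span_pos in weight_le *.
lia.
Qed.

Import Order.TTheory GRing.Theory Num.Theory.
Local Open Scope ring_scope.

Lemma length_eq_mul_block [R : realFieldType] [c : R] [b1 b kb m : nat] :
  0 <= c -> (0 < b)%N -> c * b%:R = kb%:R -> b1%:R / ((1 + c) * b%:R) = m%:R ->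
  b1 = (m * (b + kb))%N.
Proof.
move=> c_ge0 b_gt0 eq_kb eq_m; apply/eqP.
rewrite -(eqr_nat R) natrM natrD -eq_kb -eq_m.
rewrite [b%:R + _](_ : _ = (1 + c) * b%:R); last by ring.
rewrite divfK //.
by apply: mulf_neq0; [lra | rewrite pnatr_eq0 -lt0n].
Qed.

Lemma sqr_addn_le_of_lt_sqrt2 [R : rcfType] [c : R] [a ka : nat] :
  0 <= c -> c < Num.sqrt 2 - 1 -> c * a%:R = ka%:R -> ((a + ka) ^ 2 <= 2 * a ^ 2)%N.
Proof.
move=> c_ge0 c_lt eq_ka.
rewrite -(ler_nat R) natrM !natrX natrD -eq_ka.
have sqrt2_sqr : Num.sqrt (2 : R) ^+ 2 = 2 by rewrite sqr_sqrtr // ler0n.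
have sqrt2_ge0 : 0 <= Num.sqrt (2 : R) by apply: sqrtr_ge0.
have sqr_le : (1 + c) ^+ 2 <= 2 by nra.
have -> : a%:R + c * a%:R = (1 + c) * a%:R :> R by ring.
by rewrite exprMn; apply: ler_wpM2r => //; apply: exprn_ge0.
Qed.

Theorem lemma3p7 (R : realType) (c : R) (a b1 b2 ka kb m : nat)
    (w1 : nat -> nat) (p q : seq nat) :
  0 <= c -> c < Num.sqrt 2 - 1 ->
  (0 < a)%N -> (0 < b1)%N -> (0 < b2)%N ->
  c * a%:R = ka%:R -> c * b2%:R = kb%:R ->
  b1%:R / ((1 + c) * b2%:R) = m%:R -> (0 < m)%N ->
  (w1 = one_inf a ka \/ w1 = two_inf a ka) ->
  common_subseq w1 (one_fin b1 b2 kb ++ two_fin b1 b2 kb) p q ->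
  (3 + c) * (size p)%:R - 4%:R * a%:R * b1%:R / b2%:R
    <= (span_pos p)%:R + 2%:R * b1%:R.
Proof.
move=> c_ge0 c_lt a_gt0 _ b2_gt0 eq_ka eq_kb eq_m _ w1E common.
have b1E := length_eq_mul_block c_ge0 b2_gt0 eq_kb eq_m.
have bound : ((3 * a + ka) * size p
    <= a * span_pos p + 2 * a * b1 + 4 * m * (a * a))%N.
  rewrite b1E in common *; have ak_sqr_le := sqr_addn_le_of_lt_sqrt2 c_ge0 c_lt eq_ka.
  by case: w1E common => ->; apply: blockpat_common_subseq_le.
have ratio : 4%:R * a%:R * b1%:R / b2%:R = 4%:R * a%:R * (m%:R * (1 + c)) :> R.
  by rewrite b1E natrM natrD -eq_kb; field; rewrite pnatr_eq0 -lt0n.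
move: bound; rewrite -(ler_nat R) !(natrD, natrM) -eq_ka ratio.
have a_gt0R : (0 : R) < a%:R by rewrite ltr0n.
have : 0 <= a%:R * a%:R * m%:R * c :> R by rewrite !mulr_ge0 ?ler0n.
nra.
Qed.
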